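(* Let $\{(\mathbf{x}^k,\mathbf{y}^k,\boldsymbol{\gamma}^k)\}$ be generated by the two-block linearized ADMM below, applied under the standing assumptions (i)–(iv) below. Then for every $k\ge0$, $$L_\beta(\mathbf{x}^{k+1},\mathbf{y}^k,\boldsymbol{\gamma}^k)-L_\beta(\mathbf{x}^{k+1},\mathbf{y}^{k+1},\boldsymbol{\gamma}^k)\ge C_1\|\mathbf{y}^k-\mathbf{y}^{k+1}\|^2,$$ where $C_1=\frac{2L_y-L_w}{2}$ and $L_w=L_g+L_h$.
   Context: Problem: minimize $g(\mathbf{x},\mathbf{y})+f(\mathbf{x})+h(\mathbf{y})$ s.t. $\mathbf{A}\mathbf{x}+\mathbf{B}\mathbf{y}=\mathbf{0}$, $\mathbf{x}\in\mathbb{R}^p$, $\mathbf{y}\in\mathbb{R}^q$, $\mathbf{A}\in\mathbb{R}^{n\times p}$, $\mathbf{B}\in\mathbb{R}^{n\times q}$. Standing assumptions: (i) $\nabla h$ is $L_h$-Lipschitz; (ii) $\nabla g$ is $L_g$-Lipschitz; (iii) $g+f+h$ is lower bounded on the feasible set $\{\mathbf{A}\mathbf{x}+\mathbf{B}\mathbf{y}=\mathbf{0}\}$ and coercive w.r.t. $\mathbf{y}$ over it; (iv) $\mathbf{B}$ has full column rank and $\mathrm{Im}(\mathbf{A})\subset\mathrm{Im}(\mathbf{B})$. $L_\beta(\mathbf{x},\mathbf{y},\boldsymbol{\gamma})=g(\mathbf{x},\mathbf{y})+f(\mathbf{x})+h(\mathbf{y})+\langle\boldsymbol{\gamma},\mathbf{A}\mathbf{x}+\mathbf{B}\mathbf{y}\rangle+\frac{\beta}{2}\|\mathbf{A}\mathbf{x}+\mathbf{B}\mathbf{y}\|^2$.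 Algorithm (parameters $L_x,L_y,\beta>0$): $\mathbf{x}^{k+1}\in\arg\min\bar f^k$, $\mathbf{y}^{k+1}=\arg\min\bar h^k$, $\boldsymbol{\gamma}^{k+1}=\boldsymbol{\gamma}^k+\beta(\mathbf{A}\mathbf{x}^{k+1}+\mathbf{B}\mathbf{y}^{k+1})$, where $\bar f^k(\mathbf{x})=f(\mathbf{x})+\langle\boldsymbol{\gamma}^k,\mathbf{A}\mathbf{x}\rangle+\frac{L_x}{2}\|\mathbf{x}-\mathbf{x}^k\|^2+\langle\mathbf{x}-\mathbf{x}^k,\nabla_{\mathbf{x}}g(\mathbf{x}^k,\mathbf{y}^k)+\beta\mathbf{A}^{\rm T}(\mathbf{A}\mathbf{x}^k+\mathbf{B}\mathbf{y}^k)\rangle$, $\bar h^k(\mathbf{y})=\langle\boldsymbol{\gamma}^k,\mathbf{B}\mathbf{y}\rangle+\frac{L_y}{2}\|\mathbf{y}-\mathbf{y}^k\|^2+\frac{\beta}{2}\|\mathbf{A}\mathbf{x}^{k+1}+\mathbf{B}\mathbf{y}\|^2+\langle\mathbf{y}-\mathbf{y}^k,\nabla_{\mathbf{y}}g(\mathbf{x}^{k+1},\mathbf{y}^k)+\nabla h(\mathbf{y}^k)\rangle$. *)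

From HB Require Import structures.
From mathcomp Require Import all_boot all_order all_algebra.
From mathcomp Require Import all_classical all_reals all_analysis.
Set Implicit Arguments. Unset Strict Implicit. Unset Printing Implicit Defensive.
Import Order.TTheory GRing.Theory Num.Theory.
Import numFieldNormedType.Exports.
Local Open Scope ring_scope.

Definition dotv (R : realType) (m : nat) (u v : 'cV[R]_m) : R :=
  \sum_(i < m) u i 0 * v i 0.

Definition enorm (R : realType) (m : nat) (v : 'cV[R]_m) : R :=
  Num.sqrt (dotv v v).

Definition is_gradient (R : realType) (m : nat)
    (f : 'cV[R]_m -> R) (gf : 'cV[R]_m -> 'cV[R]_m) : Prop :=
  forall z, differentiable f z /\ forall v, ('d f z : 'cV[R]_m -> R) v = dotv (gf z) v.

Definition lipschitz_e (R : realType) (m k : nat)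
    (F : 'cV[R]_m -> 'cV[R]_k) (L : R) : Prop :=
  forall z1 z2, enorm (F z1 - F z2) <= L * enorm (z1 - z2).

(* The augmented Lagrangian, with g(x,y) := G (col_mx x y). *)
Definition Lbeta (R : realType) (n p q : nat)
    (G : 'cV[R]_(p + q) -> R) (f : 'cV[R]_p -> R) (h : 'cV[R]_q -> R)
    (A : 'M[R]_(n, p)) (B : 'M[R]_(n, q)) (beta : R)
    (x : 'cV[R]_p) (y : 'cV[R]_q) (gam : 'cV[R]_n) : R :=
  G (col_mx x y) + f x + h y + dotv gam (A *m x + B *m y)
  + beta / 2 * enorm (A *m x + B *m y) ^+ 2.

(* Linearized x-subproblem objective \bar f^k. gG is the gradient of G, so
   grad_x g(x,y) = usubmx (gG (col_mx x y)). *)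
Definition fbar (R : realType) (n p q : nat)
    (gG : 'cV[R]_(p + q) -> 'cV[R]_(p + q)) (f : 'cV[R]_p -> R)
    (A : 'M[R]_(n, p)) (B : 'M[R]_(n, q)) (beta Lx : R)
    (xk : 'cV[R]_p) (yk : 'cV[R]_q) (gk : 'cV[R]_n) (x : 'cV[R]_p) : R :=
  f x + dotv gk (A *m x) + Lx / 2 * enorm (x - xk) ^+ 2
  + dotv (x - xk) (usubmx (gG (col_mx xk yk)) + beta *: (A^T *m (A *m xk + B *m yk))).

Definition hbar (R : realType) (n p q : nat)
    (gG : 'cV[R]_(p + q) -> 'cV[R]_(p + q)) (gh : 'cV[R]_q -> 'cV[R]_q)
    (A : 'M[R]_(n, p)) (B : 'M[R]_(n, q)) (beta Ly : R)
    (xk1 : 'cV[R]_p) (yk : 'cV[R]_q) (gk : 'cV[R]_n) (y : 'cV[R]_q) : R :=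
  dotv gk (B *m y) + Ly / 2 * enorm (y - yk) ^+ 2
  + beta / 2 * enorm (A *m xk1 + B *m y) ^+ 2
  + dotv (y - yk) (dsubmx (gG (col_mx xk1 yk)) + gh yk).

From HB Require Import structures.
From mathcomp Require Import all_boot all_order all_algebra.
From mathcomp Require Import all_classical all_reals all_analysis.
From mathcomp Require Import ring lra.

Set Implicit Arguments.
Unset Strict Implicit.
Unset Printing Implicit Defensive.
Import Order.TTheory GRing.Theory Num.Theory.
Import numFieldNormedType.Exports.
Local Open Scope ring_scope.

(* The y-step minimises a function that is L_y-strongly convex (L_y/2 ||y - y^k||^2
   plus a convex quadratic plus an affine term), so its value at y^k exceeds its
   minimum, attained at y^{k+1}, by at least L_y/2 ||y^k - y^{k+1}||^2.  Replacing
   the linearisations of g(x^{k+1}, .) and h at y^k by the functions themselves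
   costs at most (L_g + L_h)/2 ||y^k - y^{k+1}||^2 by the descent lemma, and the
   linear terms cancel. *)

Section QuadraticMinimum.
Variable R : realFieldType.

Lemma quadratic_ge0_linear_coef_eq0 (a Q : R) :
  (forall s, 0 <= s * a + s ^+ 2 * Q) -> a = 0.
Proof.
move=> ge0; set c := `|Q| + 1.
have c_neq0 : c != 0 by rewrite gt_eqF // ltr_wpDl.
have value : - a / c * a + (- a / c) ^+ 2 * `|Q| = - (a ^+ 2 / c ^+ 2).
  by rewrite /c; field.
have sq_le0 : a ^+ 2 / c ^+ 2 <= 0.
  rewrite -oppr_ge0 -value; apply: le_trans (ge0 (- a / c)) _.
  by rewrite lerD2l ler_wpM2l ?sqr_ge0 ?ler_norm.
have /eqP : a ^+ 2 / c ^+ 2 = 0 by apply/eqP; rewrite eq_le sq_le0 divr_ge0 ?sqr_ge0.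
by rewrite mulf_eq0 invr_eq0 !sqrf_eq0 (negbTE c_neq0) orbF => /eqP.
Qed.

Lemma quadratic_min_gap (F : R -> R) (a Q : R) :
  (forall s, F s = F 0 + s * a + s ^+ 2 * Q) -> (forall s, F 0 <= F s) ->
  F 1 = F 0 + Q.
Proof.
move=> FE Fmin.
have a0 : a = 0.
  apply: (@quadratic_ge0_linear_coef_eq0 a Q) => s.
  by have := Fmin s; rewrite [F s]FE -addrA lerDl.
by rewrite FE a0 expr1n mulr0 addr0 mul1r.
Qed.

End QuadraticMinimum.

Section InnerProduct.
Variables (R : realType) (m : nat).
Implicit Types u v w : 'cV[R]_m.

Lemma dotvC u v : dotv u v = dotv v u.
Proof. by apply: eq_bigr => i _; rewrite mulrC. Qed.

Lemma dotvDl u v w : dotv (u + v) w = dotv u w + dotv v w.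
Proof. by rewrite /dotv -big_split; apply: eq_bigr => i _; rewrite !mxE mulrDl. Qed.

Lemma dotvDr u v w : dotv w (u + v) = dotv w u + dotv w v.
Proof. by rewrite dotvC dotvDl !(dotvC w). Qed.

Lemma dotvZl (a : R) u v : dotv (a *: u) v = a * dotv u v.
Proof. by rewrite /dotv mulr_sumr; apply: eq_bigr => i _; rewrite !mxE mulrA. Qed.

Lemma dotvZr (a : R) u v : dotv u (a *: v) = a * dotv u v.
Proof. by rewrite dotvC dotvZl dotvC. Qed.

Lemma dotvNl u v : dotv (- u) v = - dotv u v.
Proof. by rewrite -scaleN1r dotvZl mulN1r. Qed.

Lemma dotvNr u v : dotv u (- v) = - dotv u v.
Proof. by rewrite dotvC dotvNl dotvC. Qed.

Lemma dotvBl u v w : dotv (u - v) w = dotv u w - dotv v w.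
Proof. by rewrite dotvDl dotvNl. Qed.

Lemma dotvBr u v w : dotv w (u - v) = dotv w u - dotv w v.
Proof. by rewrite dotvDr dotvNr. Qed.

Lemma dotv0l v : dotv 0 v = 0.
Proof. by rewrite /dotv big1 // => i _; rewrite mxE mul0r. Qed.

Lemma dotv0r v : dotv v 0 = 0.
Proof. by rewrite dotvC dotv0l. Qed.

Lemma dotvv_ge0 v : 0 <= dotv v v.
Proof. by apply: sumr_ge0 => i _; rewrite -expr2 sqr_ge0. Qed.

Lemma dotvv_eq0 v : (dotv v v == 0) = (v == 0).
Proof.
apply/idP/eqP => [|->]; last by rewrite dotv0l.
rewrite /dotv psumr_eq0 => [/allP v0|i _]; last by rewrite -expr2 sqr_ge0.
apply/matrixP => i j; rewrite (ord1 j) mxE.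
by apply/eqP; have := v0 i (mem_index_enum _); rewrite /= mulf_eq0 orbb.
Qed.

Lemma enorm_ge0 v : 0 <= enorm v.
Proof. exact: sqrtr_ge0. Qed.

Lemma enorm_sqr v : enorm v ^+ 2 = dotv v v.
Proof. by rewrite sqr_sqrtr // dotvv_ge0. Qed.

Lemma enormZ (a : R) v : enorm (a *: v) = `|a| * enorm v.
Proof. by rewrite /enorm dotvZl dotvZr mulrA -expr2 sqrtrM ?sqr_ge0 // sqrtr_sqr. Qed.

Lemma enorm_distC u v : enorm (u - v) = enorm (v - u).
Proof. by rewrite /enorm -opprB dotvNl dotvNr opprK. Qed.

Lemma CauchySchwarz_sqr u v : dotv u v ^+ 2 <= dotv u u * dotv v v.
Proof.
have [->|v_neq0] := eqVneq v 0; first by rewrite dotvC !dotv0l expr0n mulr0.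
have vv_gt0 : 0 < dotv v v by rewrite lt_def dotvv_eq0 v_neq0 dotvv_ge0.
(* expand 0 <= <u - s v, u - s v> at the minimising s = <u, v> / <v, v> *)
set s := dotv u v / dotv v v.
have ge0 := dotvv_ge0 (u - s *: v).
rewrite dotvBl !dotvBr !dotvZl !dotvZr (dotvC v u) in ge0.
rewrite -subr_ge0; have -> : dotv u u * dotv v v - dotv u v ^+ 2 =
  dotv v v * (dotv u u - s * dotv u v - (s * dotv u v - s * (s * dotv v v))).
  by rewrite /s; field; rewrite gt_eqF.
by rewrite mulr_ge0 // ltW.
Qed.

Lemma CauchySchwarz u v : dotv u v <= enorm u * enorm v.
Proof.
rewrite -sqrtrM ?dotvv_ge0 // (le_trans (ler_norm _)) // -sqrtr_sqr ler_sqrt.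
  exact: CauchySchwarz_sqr.
by rewrite mulr_ge0 ?dotvv_ge0.
Qed.

End InnerProduct.

Lemma dotv_col_mx (R : realType) (p q : nat) (u1 v1 : 'cV[R]_p) (u2 v2 : 'cV[R]_q) :
  dotv (col_mx u1 u2) (col_mx v1 v2) = dotv u1 v1 + dotv u2 v2.
Proof.
rewrite /dotv big_split_ord; congr (_ + _); apply: eq_bigr => i _.
  by rewrite !col_mxEu.
by rewrite !col_mxEd.
Qed.

Section DerivativeAlongLine.
Variables (R : realType) (V W : normedModType R).

Lemma differentiable_line (a d : V) (t : R) :
  differentiable (fun s : R => a + s *: d) t /\ 'd (fun s : R => a + s *: d) t 1 = d.
Proof.
have dscale : differentiable (fun s : R => s *: d) t by exact: ex_diff.
split; first by apply: differentiableD; first exact: differentiable_cst.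
rewrite (diffD (differentiable_cst a t) dscale) /=.
by rewrite diff_cst diff_val add0r scale1r.
Qed.

Lemma is_derive_along_line (f : V -> W) (a d : V) (t : R) :
  differentiable f (a + t *: d) ->
  is_derive t 1 (fun s : R => f (a + s *: d)) ('d f (a + t *: d) d).
Proof.
move=> df; have [dline dlineE] := differentiable_line a d t.
have dcomp : differentiable (f \o (fun s : R => a + s *: d)) t.
  exact: differentiable_comp.
apply: DeriveDef; first exact: diff_derivable.
by rewrite (deriveE _ dcomp) (diff_comp dline df) /= dlineE.
Qed.
End DerivativeAlongLine.

Section DescentLemma.
Variables (R : realType) (m : nat).
Implicit Types (a d : 'cV[R]_m) (t : R).

Lemma lipschitz_dotv_line (F : 'cV[R]_m -> 'cV[R]_m) (L : R) a d t :
  lipschitz_e F L -> 0 <= t -> dotv (F (a + t *: d) - F a) d <= L * t * dotv d d.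
Proof.
move=> FL t_ge0; apply: (le_trans (CauchySchwarz _ _)).
have := FL (a + t *: d) a; rewrite [a + _ - _]addrC addKr enormZ ger0_norm // mulrA => FLt.
by rewrite -enorm_sqr expr2 mulrA ler_wpM2r ?enorm_ge0.
Qed.

Lemma descent_lemma (f : 'cV[R]_m -> R) gf (L : R) :
  is_gradient f gf -> lipschitz_e gf L -> forall a b,
  f b <= f a + dotv (gf a) (b - a) + L / 2 * enorm (b - a) ^+ 2.
Proof.
move=> fG gfL a b; set d := b - a; set c := dotv (gf a) d; set K := L / 2 * dotv d d.
(* phi is nonincreasing on [0, 1], and phi 1 <= phi 0 is the claim *)
pose phi := fun s : R => f (a + s *: d) - (c * s + K * (s * s)).
have phi_derive t : is_derive t 1 phi (dotv (gf (a + t *: d)) d - (c + K * (2 * t))).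
  apply: is_deriveB.
    have [df dfE] := fG (a + t *: d); rewrite -dfE; exact: is_derive_along_line.
  have -> : (fun s : R => c * s + K * (s * s)) = c \*: id + K \*: (id * id) by [].
  by apply: is_derive_eq; rewrite /= !scaler1 /GRing.scale /=; lra.
have phi'_le0 t : t \in `]0, 1[ -> derive1 phi t <= 0.
  rewrite in_itv /= => /andP[t_gt0 _].
  rewrite derive1E (@derive_val _ _ _ _ _ _ _ (phi_derive t)) subr_le0 -lerBlDl -dotvBl.
  by apply: le_trans (lipschitz_dotv_line _ _ gfL (ltW t_gt0)) _; rewrite /K; lra.
have phi_derivable t : derivable phi t 1 := @ex_derive _ _ _ _ _ _ _ (phi_derive t).
have : phi 1 <= phi 0.
  apply: (ler0_derive1_le_cc (fun t _ => phi_derivable t) phi'_le0);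
    rewrite ?in_itv /= ?ler01 ?lexx //.
  by apply: derivable_within_continuous => t _; exact: phi_derivable.
have a_plus_d : a + d = b by rewrite /d addrC subrK.
by rewrite /phi scale1r scale0r addr0 a_plus_d enorm_sqr /K; lra.
Qed.

End DescentLemma.

Lemma descent_lemma_dsubmx (R : realType) (p q : nat)
    (G : 'cV[R]_(p + q) -> R) gG (L : R) :
  is_gradient G gG -> lipschitz_e gG L -> forall x y0 y1,
  G (col_mx x y1) <= G (col_mx x y0) + dotv (dsubmx (gG (col_mx x y0))) (y1 - y0)
                     + L / 2 * enorm (y1 - y0) ^+ 2.
Proof.
move=> GG gGL x y0 y1; have := descent_lemma GG gGL (col_mx x y0) (col_mx x y1).
rewrite opp_col_mx add_col_mx subrr -{1}(vsubmxK (gG (col_mx x y0))).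
by rewrite dotv_col_mx dotv0r add0r !enorm_sqr dotv_col_mx dotv0l add0r.
Qed.

Section LinearizedYStep.
Variables (R : realType) (n p q : nat).
Variables (gG : 'cV[R]_(p + q) -> 'cV[R]_(p + q)) (gh : 'cV[R]_q -> 'cV[R]_q).
Variables (A : 'M[R]_(n, p)) (B : 'M[R]_(n, q)) (beta Ly : R).
Variables (x1 : 'cV[R]_p) (yk : 'cV[R]_q) (gk : 'cV[R]_n).

Local Notation hbark := (hbar gG gh A B beta Ly x1 yk gk).

Lemma hbar_along_line (y e : 'cV[R]_q) : exists a, forall s : R,
  hbark (y + s *: e)
  = hbark y + s * a + s ^+ 2 * (Ly / 2 * enorm e ^+ 2 + beta / 2 * enorm (B *m e) ^+ 2).
Proof.
set w := dsubmx (gG (col_mx x1 yk)) + gh yk; set u := A *m x1 + B *m y.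
exists (dotv gk (B *m e) + Ly * dotv (y - yk) e + beta * dotv u (B *m e) + dotv e w) => s.
have shift : y + s *: e - yk = (y - yk) + s *: e by rewrite addrAC.
have image : B *m (y + s *: e) = B *m y + s *: (B *m e).
  by rewrite mulmxDr scalemxAr.
have residual : A *m x1 + B *m (y + s *: e) = u + s *: (B *m e).
  by rewrite image addrA.
rewrite /hbar -/w -/u {}shift {}residual {}image.
move: (y - yk) u w (B *m y) (B *m e) => z u w By Be.
rewrite !enorm_sqr !dotvDl !dotvDr !dotvZl !dotvZr (dotvC e z) (dotvC Be u).
lra.
Qed.

Lemma hbar_min_gap (y1 : 'cV[R]_q) : 0 <= beta -> (forall y, hbark y1 <= hbark y) ->
  forall y, hbark y1 + Ly / 2 * enorm (y - y1) ^+ 2 <= hbark y.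
Proof.
move=> beta_ge0 y1_min y; set e := y - y1.
have [a hbarE] := hbar_along_line y1 e.
pose F := fun s : R => hbark (y1 + s *: e).
have F0 : F 0 = hbark y1 by rewrite /F scale0r addr0.
have F1 : F 1 = hbark y by rewrite /F scale1r /e addrC subrK.
have gap : F 1 = F 0 + (Ly / 2 * enorm e ^+ 2 + beta / 2 * enorm (B *m e) ^+ 2).
  apply: (@quadratic_min_gap _ F a) => s; rewrite F0; first by rewrite /F hbarE.
  exact: y1_min.
rewrite -F1 gap F0 lerD2l lerDl.
by rewrite mulr_ge0 ?divr_ge0 ?sqr_ge0.
Qed.

End LinearizedYStep.

Theorem lemma6 (R : realType) (n p q : nat)
    (G : 'cV[R]_(p + q) -> R) (gG : 'cV[R]_(p + q) -> 'cV[R]_(p + q))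
    (f : 'cV[R]_p -> R) (h : 'cV[R]_q -> R) (gh : 'cV[R]_q -> 'cV[R]_q)
    (A : 'M[R]_(n, p)) (B : 'M[R]_(n, q))
    (Lg Lh Lx Ly beta : R)
    (x : nat -> 'cV[R]_p) (y : nat -> 'cV[R]_q) (gam : nat -> 'cV[R]_n) :
  (* (i) grad h is Lh-Lipschitz *)
  is_gradient h gh -> lipschitz_e gh Lh ->
  (* (ii) grad g is Lg-Lipschitz, with g(x,y) = G (col_mx x y) *)
  is_gradient G gG -> lipschitz_e gG Lg ->
  (* (iii) g+f+h lower bounded on the feasible set, coercive in y over it *)
  (exists M : R, forall x0 y0, A *m x0 + B *m y0 = 0 ->
       M <= G (col_mx x0 y0) + f x0 + h y0) ->
  (forall M : R, exists r : R, forall x0 y0, A *m x0 + B *m y0 = 0 ->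
       r < enorm y0 -> M < G (col_mx x0 y0) + f x0 + h y0) ->
  (* (iv) B has full column rank and Im(A) is contained in Im(B) *)
  \rank B = q ->
  (forall x0 : 'cV[R]_p, exists y0 : 'cV[R]_q, A *m x0 = B *m y0) ->
  (* parameters *)
  0 < Lx -> 0 < Ly -> 0 < beta ->
  (* the algorithm *)
  (forall k x0, fbar gG f A B beta Lx (x k) (y k) (gam k) (x k.+1)
                <= fbar gG f A B beta Lx (x k) (y k) (gam k) x0) ->
  (forall k y0, hbar gG gh A B beta Ly (x k.+1) (y k) (gam k) (y k.+1)
                <= hbar gG gh A B beta Ly (x k.+1) (y k) (gam k) y0) ->
  (forall k, gam k.+1 = gam k + beta *: (A *m x k.+1 + B *m y k.+1)) ->
  forall k : nat,
    Lbeta G f h A B beta (x k.+1) (y k) (gam k)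
    - Lbeta G f h A B beta (x k.+1) (y k.+1) (gam k)
    >= (2 * Ly - (Lg + Lh)) / 2 * enorm (y k - y k.+1) ^+ 2.
Proof.
move=> hG ghL GG gGL _ _ _ _ _ _ beta_gt0 _ y_step _ k.
have descentG := descent_lemma_dsubmx GG gGL (x k.+1) (y k) (y k.+1).
have descenth := descent_lemma hG ghL (y k) (y k.+1).
have y_gap := hbar_min_gap (ltW beta_gt0) (y_step k) (y k).
rewrite /hbar subrr [enorm 0 ^+ 2]enorm_sqr !dotv0l mulr0 !addr0 dotvDr in y_gap.
rewrite !(dotvC (y k.+1 - y k)) (enorm_distC (y k)) in y_gap.
rewrite /Lbeta !dotvDr (enorm_distC (y k)).
lra.
Qed.
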